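(* Let $\mathcal{S} \subseteq M_{m,n}$ be a subspace and let $P_{\mathcal{S}} \in M_n \otimes M_m$ be the orthogonal projection onto $\mathrm{vec}(\mathcal{S}) \subseteq \mathbb{R}^n\otimes\mathbb{R}^m$. Then \[ d(\mathcal{S})^2 \le W^{1+i}_{\max}(P_{\mathcal{S}}). \] In particular, if $W^{1+i}_{\max}(P_{\mathcal{S}}) < 1$ then $\mathcal{S}$ is rank-one-avoiding, i.e. no matrix in $\mathcal{S}$ has rank exactly $1$.
   Context: $M_{m,n}$ denotes real $m\times n$ matrices, $M_n = M_{n,n}$, and $M_n\otimes M_m$ is identified with $M_{nm}$ via the Kronecker product. The vectorization $\mathrm{vec}: M_{m,n}\to\mathbb{R}^n\otimes\mathbb{R}^m = \mathbb{R}^{mn}$ stacks the columns of a matrix on top of one another (first column on top), and $\mathrm{vec}(\mathcal{S}) = \{\mathrm{vec}(Y): Y\in\mathcal{S}\}$. For a subspace $\mathcal{S}$, $d(\mathcal{S}) = \max\{\|Y\| : Y\in\mathcal{S}, \|Y\|_F \le 1\}$, where $\|Y\|$ is the operator norm (largest singular value) and $\|Y\|_F$ the Frobenius norm. For $A = \sum_j X_j \otimes Y_j \in M_n\otimes M_m$, the partial transpose is $A^\Gamma = \sum_j X_j \otimes Y_j^T$. The numerical range of $A\in M_N(\mathbb{C})$ is $W(A) = \{\mathbf{x}^*A\mathbf{x} : \mathbf{x}\in\mathbb{C}^N, \|\mathbf{x}\|=1\}$. For real $B$, $W^{1+i}(B) = \{c\in\mathbb{R} : c(1+i)\in W(B+iB^\Gamma)\}$,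 a nonempty compact interval with maximum $W^{1+i}_{\max}(B)$. *)

From HB Require Import structures.
From mathcomp Require Import all_boot all_order all_algebra.
From mathcomp Require Import complex mxtens.
From mathcomp Require Import classical_sets reals.
Set Implicit Arguments. Unset Strict Implicit. Unset Printing Implicit Defensive.
Import Order.TTheory GRing.Theory Num.Theory.
Local Open Scope ring_scope.
Local Open Scope classical_set_scope.

Section Defs.
Variable R : realType.

(* Index convention: 'I_(n*m) ~ 'I_n * 'I_m via mxtens_index (j,i) = j*m + i,
   i.e. R^n (x) R^m = R^(nm) and M_n (x) M_m = M_(nm) via the Kronecker
   product (this is the indexing of mxtens.tensmx). *)

(* vec : M_{m,n} -> R^n (x) R^m, stacking the columns (first column on top):
   entry j*m + i of vec Y is Y i j. *)
Definition vecm m n (Y : 'M[R]_(m, n)) : 'cV[R]_(n * m) :=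
  \col_k Y (mxtens_unindex k).2 (mxtens_unindex k).1.

(* Partial transpose on M_n (x) M_m = M_(nm): transposes the second
   (M_m) tensor factor: (X (x) Y)^Gamma = X (x) Y^T. *)
Definition ptrans n m (A : 'M[R]_(n * m)) : 'M[R]_(n * m) :=
  \matrix_(k, l)
    A (mxtens_index ((mxtens_unindex k).1, (mxtens_unindex l).2))
      (mxtens_index ((mxtens_unindex l).1, (mxtens_unindex k).2)).

Definition vnorm k (x : 'cV[R]_k) : R := Num.sqrt (\sum_i x i 0 ^+ 2).
Definition frobnorm m n (Y : 'M[R]_(m, n)) : R :=
  Num.sqrt (\sum_i \sum_j Y i j ^+ 2).
Definition opnorm m n (Y : 'M[R]_(m, n)) : R :=
  sup [set vnorm (Y *m x) | x in [set x : 'cV[R]_n | vnorm x = 1]].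

Definition dS m n (S : {vspace 'M[R]_(m, n)}) : R :=
  sup [set opnorm Y | Y in [set Y : 'M[R]_(m, n) | Y \in S /\ frobnorm Y <= 1]].

Definition is_orthoproj m n (S : {vspace 'M[R]_(m, n)}) (P : 'M[R]_(n * m)) :=
  [/\ P^T = P, P *m P = P &
      forall v : 'cV[R]_(n * m),
        (exists w, v = P *m w) <-> (exists2 Y, Y \in S & v = vecm Y)].

Local Open Scope complex_scope.
Definition cmx N M (A : 'M[R]_(N, M)) : 'M[R[i]]_(N, M) :=
  map_mx (fun r => r%:C) A.
Definition adj N (x : 'cV[R[i]]_N) : 'rV[R[i]]_N := (map_mx conjc x)^T.

Definition numrange N (A : 'M[R[i]]_N) : set R[i] :=
  [set (adj x *m A *m x) 0 0 | x in [set x : 'cV[R[i]]_N | (adj x *m x) 0 0 = 1]].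

Definition W1i n m (B : 'M[R]_(n * m)) : set R :=
  [set c | numrange (cmx B + 'i *: cmx (ptrans B)) (c%:C * (1 + 'i))].
Definition W1i_max n m (B : 'M[R]_(n * m)) : R := sup (W1i B).

End Defs.

From HB Require Import structures.
From mathcomp Require Import all_boot all_order all_algebra.
From mathcomp Require Import complex mxtens.
From mathcomp Require Import classical_sets reals.
From mathcomp Require Import ring.
Import Order.TTheory GRing.Theory Num.Theory.
Set Implicit Arguments. Unset Strict Implicit. Unset Printing Implicit Defensive.
Local Open Scope ring_scope.

(* For unit vectors u and x, the product vector z = vec (u x^T) = x (x) u
   satisfies z^T P^Gamma z = z^T P z, so z^* (P + i P^Gamma) z = (z^T P z)(1 + i)
   and z^T P z lies in W^{1+i}(P).  For Y in S with ||Y||_F <= 1 we have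
   u^T Y x = <z, vec Y> = <P z, vec Y>, so Cauchy-Schwarz gives
   (u^T Y x)^2 <= ||P z||^2 = z^T P z <= W^{1+i}_max(P); taking suprema over
   u, x and Y bounds d(S)^2.  A rank-one Y in S normalises to u x^T in S, for
   which u^T Y x = 1. *)

Section Suprema.
Variable R : realType.
Local Open Scope classical_set_scope.
Implicit Types (E : set R) (c : R).

Lemma sup_ge0 E : (forall e, E e -> 0 <= e) -> 0 <= sup E.
Proof.
move=> E_ge0; have [supE|] := boolp.pselect (has_sup E); last by move/sup_out->.
by have [e Ee] := supE.1; apply: le_trans (E_ge0 e Ee) (sup_upper_bound supE Ee).
Qed.

Lemma sup_sqr_le E c :
  0 <= c -> (forall e, E e -> 0 <= e /\ e ^+ 2 <= c) -> sup E ^+ 2 <= c.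
Proof.
move=> c_ge0 hE.
have supE_ge0 : 0 <= sup E by apply: sup_ge0 => e /hE[].
suff : sup E <= Num.sqrt c.
  by rewrite -(ler_pXn2r (n := 2)) ?nnegrE ?sqrtr_ge0 // sqr_sqrtr.
have [[e Ee]|E0] := boolp.pselect (E !=set0); last first.
  rewrite (_ : E = set0) ?sup0 ?sqrtr_ge0 //.
  by apply/seteqP; split=> e // Ee; apply: E0; exists e.
apply: ge_sup; first by exists e.
move=> e' /hE[e'_ge0 e'c]; rewrite -(ger0_norm e'_ge0) -sqrtr_sqr.
exact: ler_wsqrtr.
Qed.

End Suprema.

Section RealVectors.
Variable R : realType.

Definition vdot k (a b : 'cV[R]_k) : R := \sum_i a i 0 * b i 0.

Definition normalize k (v : 'cV[R]_k) : 'cV[R]_k := (vnorm v)^-1 *: v.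

Lemma vdotE k (a b : 'cV[R]_k) : vdot a b = (a^T *m b) 0 0.
Proof. by rewrite mxE; apply: eq_bigr => i _; rewrite mxE. Qed.

Lemma vdotC k (a b : 'cV[R]_k) : vdot a b = vdot b a.
Proof. by apply: eq_bigr => i _; rewrite mulrC. Qed.

Lemma vdotZl k s (a b : 'cV[R]_k) : vdot (s *: a) b = s * vdot a b.
Proof. by rewrite /vdot mulr_sumr; apply: eq_bigr => i _; rewrite mxE mulrA. Qed.

Lemma vdot_comb k s t (a b : 'cV[R]_k) :
  vdot (s *: a + t *: b) (s *: a + t *: b) =
  s ^+ 2 * vdot a a + 2 * s * t * vdot a b + t ^+ 2 * vdot b b.
Proof.
rewrite /vdot !mulr_sumr -!big_split /=.
by apply: eq_bigr => i _; rewrite !mxE; ring.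
Qed.

Lemma vdotvv_ge0 k (a : 'cV[R]_k) : 0 <= vdot a a.
Proof. by apply: sumr_ge0 => i _; rewrite -expr2 sqr_ge0. Qed.

Lemma vdotvv_eq0 k (a : 'cV[R]_k) : (vdot a a == 0) = (a == 0).
Proof.
apply/idP/eqP => [|->]; last by rewrite /vdot big1 // => i _; rewrite mxE mul0r.
rewrite psumr_eq0 => [/allP a0|i _]; last by rewrite -expr2 sqr_ge0.
apply/matrixP => i j; rewrite (ord1 j) mxE.
by move: (a0 i (mem_index_enum i)); rewrite mulf_eq0 orbb => /eqP.
Qed.

Lemma vnorm_sqr k (a : 'cV[R]_k) : vnorm a ^+ 2 = vdot a a.
Proof.
rewrite sqr_sqrtr; last by apply: sumr_ge0 => i _; rewrite sqr_ge0.
by apply: eq_bigr => i _; rewrite expr2.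
Qed.

Lemma vnorm_eq0 k (a : 'cV[R]_k) : (vnorm a == 0) = (a == 0).
Proof. by rewrite -sqrf_eq0 vnorm_sqr vdotvv_eq0. Qed.

Lemma vdot_normalize k (a : 'cV[R]_k) :
  a != 0 -> vdot (normalize a) (normalize a) = 1.
Proof.
rewrite -vnorm_eq0 => a0.
by rewrite vdotZl vdotC vdotZl -vnorm_sqr; field.
Qed.

Lemma vdot_normalizel k (a : 'cV[R]_k) : vdot (normalize a) a = vnorm a.
Proof.
rewrite vdotZl -vnorm_sqr.
by have [->|a0] := eqVneq (vnorm a) 0; rewrite ?invr0 ?mul0r // expr2 mulKf.
Qed.

Lemma vdot_delta k (i : 'I_k) : vdot (delta_mx i 0) (delta_mx i 0) = 1.
Proof. by rewrite vdotE trmx_delta mul_delta_mx mxE !eqxx. Qed.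

Lemma vdot_sqr_le k (a b : 'cV[R]_k) : vdot a b ^+ 2 <= vdot a a * vdot b b.
Proof.
have [b0|b_neq0] := eqVneq b 0.
  have -> : vdot a b = 0 by rewrite b0 /vdot big1 // => i _; rewrite mxE mulr0.
  by rewrite expr0n mulr_ge0 ?vdotvv_ge0.
have bb_gt0 : 0 < vdot b b by rewrite lt0r vdotvv_eq0 b_neq0 vdotvv_ge0.
(* expand [0 <= | <b,b> a - <a,b> b |^2] *)
have := vdotvv_ge0 (vdot b b *: a + (- vdot a b) *: b).
rewrite vdot_comb vdotC.
have -> : vdot b b ^+ 2 * vdot a a + 2 * vdot b b * - vdot b a * vdot b a
          + (- vdot b a) ^+ 2 * vdot b b
          = vdot b b * (vdot a a * vdot b b - vdot b a ^+ 2) by ring.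
by rewrite pmulr_rge0 // subr_ge0.
Qed.

Lemma sum_mxtens_index n m (F : 'I_(n * m) -> R) :
  \sum_k F k = \sum_(j < n) \sum_(i < m) F (mxtens_index (j, i)).
Proof.
rewrite pair_big /= (reindex (@mxtens_unindex n m)) /=; last first.
  by exists (@mxtens_index n m) => k _; rewrite ?mxtens_indexK ?mxtens_unindexK.
by apply: eq_bigr => k _; rewrite mxtens_unindexK.
Qed.

Lemma vecmE m n (Y : 'M[R]_(m, n)) j i : vecm Y (mxtens_index (j, i)) 0 = Y i j.
Proof. by rewrite mxE mxtens_indexK. Qed.

Lemma frobnorm_sqr m n (Y : 'M[R]_(m, n)) :
  frobnorm Y ^+ 2 = vdot (vecm Y) (vecm Y).
Proof.
rewrite sqr_sqrtr; last by do 2![apply: sumr_ge0 => ? _]; rewrite sqr_ge0.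
rewrite /vdot sum_mxtens_index exchange_big /=.
by apply: eq_bigr => i _; apply: eq_bigr => j _; rewrite vecmE expr2.
Qed.

Definition tensv m n (u : 'cV[R]_m) (x : 'cV[R]_n) : 'cV[R]_(n * m) :=
  vecm (u *m x^T).

Lemma tensvE m n (u : 'cV[R]_m) (x : 'cV[R]_n) j i :
  tensv u x (mxtens_index (j, i)) 0 = u i 0 * x j 0.
Proof. by rewrite vecmE mxE big_ord1 !mxE. Qed.

Lemma vdot_tensv m n (u u' : 'cV[R]_m) (x x' : 'cV[R]_n) :
  vdot (tensv u x) (tensv u' x') = vdot u u' * vdot x x'.
Proof.
rewrite /vdot sum_mxtens_index mulrC big_distrl /=; apply: eq_bigr => j _.
by rewrite big_distrr /=; apply: eq_bigr => i _; rewrite !tensvE; ring.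
Qed.

Lemma vdot_tensv_vecm m n (u : 'cV[R]_m) (x : 'cV[R]_n) (Y : 'M[R]_(m, n)) :
  vdot (tensv u x) (vecm Y) = (u^T *m Y *m x) 0 0.
Proof.
rewrite /vdot sum_mxtens_index mxE; apply: eq_bigr => j _.
rewrite mxE big_distrl /=; apply: eq_bigr => i _.
by rewrite tensvE vecmE !mxE; ring.
Qed.

Lemma vdot_tensv_mulmx m n (u : 'cV[R]_m) (x : 'cV[R]_n) (A : 'M[R]_(n * m)) :
  vdot (tensv u x) (A *m tensv u x) =
  \sum_(j < n) \sum_(i < m) \sum_(k < n) \sum_(l < m)
    u i 0 * x j 0 * A (mxtens_index (j, i)) (mxtens_index (k, l)) * (u l 0 * x k 0).
Proof.
rewrite /vdot sum_mxtens_index; apply: eq_bigr => j _; apply: eq_bigr => i _.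
rewrite tensvE mxE sum_mxtens_index mulr_sumr; apply: eq_bigr => k _.
by rewrite mulr_sumr; apply: eq_bigr => l _; rewrite tensvE mulrA.
Qed.

(* the partial transpose only exchanges the summation indices [i] and [l] *)
Lemma vdot_tensv_ptrans m n (u : 'cV[R]_m) (x : 'cV[R]_n) (A : 'M[R]_(n * m)) :
  vdot (tensv u x) (ptrans A *m tensv u x) = vdot (tensv u x) (A *m tensv u x).
Proof.
rewrite !vdot_tensv_mulmx; apply: eq_bigr => j _.
transitivity (\sum_(i < m) \sum_(l < m) \sum_(k < n)
  u i 0 * x j 0 * A (mxtens_index (j, l)) (mxtens_index (k, i)) * (u l 0 * x k 0)).
  apply: eq_bigr => i _; rewrite exchange_big /=.
  by do 2![apply: eq_bigr => ? _]; rewrite mxE !mxtens_indexK.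
rewrite exchange_big /=; apply: eq_bigr => l _; rewrite exchange_big /=.
by do 2![apply: eq_bigr => ? _]; ring.
Qed.

Section SymmetricProjection.
Variables (k : nat) (P : 'M[R]_k).
Hypotheses (P_sym : P^T = P) (P_idem : P *m P = P).

Lemma vdot_symmetric (a b : 'cV[R]_k) : vdot a (P *m b) = vdot (P *m a) b.
Proof. by rewrite !vdotE trmx_mul P_sym mulmxA. Qed.

Lemma vdot_proj (a : 'cV[R]_k) : vdot a (P *m a) = vdot (P *m a) (P *m a).
Proof. by rewrite -vdot_symmetric mulmxA P_idem. Qed.

End SymmetricProjection.

Lemma orthoproj_vecm m n (S : {vspace 'M[R]_(m, n)}) P Y :
  is_orthoproj S P -> Y \in S -> P *m vecm Y = vecm Y.
Proof.
case=> _ P_idem rangeP YS.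
have [w ->] : exists w, vecm Y = P *m w by apply/rangeP; exists Y.
by rewrite mulmxA P_idem.
Qed.

(* [u^T Y x = <z, vec Y> = <P z, vec Y>], then Cauchy-Schwarz *)
Lemma orthoproj_bilin_sqr_le m n (S : {vspace 'M[R]_(m, n)}) P Y
    (u : 'cV[R]_m) (x : 'cV[R]_n) :
  is_orthoproj S P -> Y \in S -> frobnorm Y <= 1 ->
  (u^T *m Y *m x) 0 0 ^+ 2 <= vdot (tensv u x) (P *m tensv u x).
Proof.
move=> P_proj YS Y_le1; have [P_sym P_idem _] := P_proj.
rewrite -vdot_tensv_vecm -(orthoproj_vecm P_proj YS) vdot_symmetric //.
rewrite vdot_proj //; apply: le_trans (vdot_sqr_le _ _) _.
rewrite ler_piMr ?vdotvv_ge0 // -frobnorm_sqr exprn_ile1 //.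
exact: sqrtr_ge0.
Qed.

End RealVectors.

Section NumericalRange.
Variable R : realType.
Local Open Scope complex_scope.

Lemma cmxM a b c (A : 'M[R]_(a, b)) (B : 'M[R]_(b, c)) :
  cmx (A *m B) = cmx A *m cmx B.
Proof.
apply/matrixP => i j; rewrite !mxE rmorph_sum; apply: eq_bigr => k _.
by rewrite rmorphM !mxE.
Qed.

Lemma adj_cmx k (z : 'cV[R]_k) : adj (cmx z) = cmx z^T.
Proof. by apply/matrixP => i j; rewrite !mxE conjc_real. Qed.

Lemma cmx_quad k (z : 'cV[R]_k) (A : 'M[R]_k) :
  (adj (cmx z) *m cmx A *m cmx z) 0 0 = (vdot z (A *m z))%:C.
Proof. by rewrite adj_cmx -!cmxM vdotE mulmxA mxE. Qed.

Lemma W1i_quad n m (B : 'M[R]_(n * m)) (z : 'cV[R]_(n * m)) :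
  vdot z z = 1 -> vdot z (ptrans B *m z) = vdot z (B *m z) ->
  W1i B (vdot z (B *m z)).
Proof.
move=> z_unit ptransB; exists (cmx z).
  by rewrite /= adj_cmx -cmxM mxE -vdotE z_unit.
rewrite mulmxDr mulmxDl -scalemxAr -scalemxAl mxE [in X in _ + X]mxE.
by rewrite !cmx_quad ptransB mulrDr mulr1 mulrC.
Qed.

Lemma adj_unit_entry_le1 N (x : 'cV[R[i]]_N) k :
  (adj x *m x) 0 0 = 1 -> `|x k 0| <= 1.
Proof.
move=> x_unit; suff : `|x k 0| ^+ 2 <= 1 by rewrite expr_le1.
rewrite -x_unit mxE (bigD1 k) //= !mxE mulrC -sqr_normc lerDl.
by apply: sumr_ge0 => i _; rewrite !mxE mulrC -sqr_normc exprn_ge0.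
Qed.

Lemma numrange_norm_le N (A : 'M[R[i]]_N) w :
  numrange A w -> `|w| <= \sum_l \sum_k `|A k l|.
Proof.
move=> [x x_unit <-]; rewrite mxE; apply: le_trans (ler_norm_sum _ _ _) _.
apply: ler_sum => l _; rewrite normrM.
apply: le_trans (ler_piMr (normr_ge0 _) (adj_unit_entry_le1 l x_unit)) _.
rewrite mxE; apply: le_trans (ler_norm_sum _ _ _) _.
apply: ler_sum => k _; rewrite normrM mulrC ler_piMr //.
by rewrite !mxE normcJ adj_unit_entry_le1.
Qed.

Lemma W1i_has_ubound n m (B : 'M[R]_(n * m)) : has_ubound (W1i B).
Proof.
exists (complex.Re (\sum_l \sum_k `|(cmx B + 'i *: cmx (ptrans B)) k l|)).
move=> c /numrange_norm_le c_le.
suff : c%:C <= \sum_l \sum_k `|(cmx B + 'i *: cmx (ptrans B)) k l| :> R[i].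
  by rewrite lecE => /andP[].
apply: le_trans c_le; apply: le_trans (normc_ge_Re _).
by rewrite /= addr0 add0r mulr1 mul0r subr0 lecR ler_norm.
Qed.

End NumericalRange.

Section Bounds.
Variable R : realType.

Lemma quad_tensv_le_W1i_max m n (B : 'M[R]_(n * m)) (u : 'cV[R]_m) (x : 'cV[R]_n) :
  vdot u u = 1 -> vdot x x = 1 ->
  vdot (tensv u x) (B *m tensv u x) <= W1i_max B.
Proof.
move=> u_unit x_unit.
have W1i_quadB : W1i B (vdot (tensv u x) (B *m tensv u x)).
  by apply: W1i_quad; rewrite ?vdot_tensv ?u_unit ?x_unit ?mulr1 ?vdot_tensv_ptrans.
apply: (sup_upper_bound _ W1i_quadB); split; last exact: W1i_has_ubound.
by exists (vdot (tensv u x) (B *m tensv u x)).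
Qed.

Lemma W1i_max_orthoproj_ge0 m n (S : {vspace 'M[R]_(m, n)}) P :
  is_orthoproj S P -> 0 <= W1i_max P.
Proof.
case=> P_sym P_idem _; have [nm0|] := posnP (n * m).
  apply: sup_ge0 => c [x /= x_unit _]; move: x_unit.
  rewrite mxE big1 => [/eqP|[k k_lt_nm]]; first by rewrite eq_sym oner_eq0.
  by exfalso; move: k_lt_nm; rewrite nm0.
rewrite muln_gt0 => /andP[n_gt0 m_gt0].
apply: le_trans _ (quad_tensv_le_W1i_max P (vdot_delta _ (Ordinal m_gt0))
                                           (vdot_delta _ (Ordinal n_gt0))).
by rewrite vdot_proj // vdotvv_ge0.
Qed.

Lemma opnorm_ge0 m n (Y : 'M[R]_(m, n)) : 0 <= opnorm Y.
Proof. by apply: sup_ge0 => _ [x _ <-]; apply: sqrtr_ge0. Qed.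

Lemma opnorm_sqr_le m n (Y : 'M[R]_(m, n)) c : 0 <= c ->
  (forall u x, vdot u u = 1 -> vdot x x = 1 -> (u^T *m Y *m x) 0 0 ^+ 2 <= c) ->
  opnorm Y ^+ 2 <= c.
Proof.
move=> c_ge0 bilin_le; apply: sup_sqr_le => // _ [x x_unit <-].
split; first exact: sqrtr_ge0.
have [Yx0|Yx_neq0] := eqVneq (Y *m x) 0.
  by move/eqP: Yx0; rewrite -vnorm_eq0 => /eqP->; rewrite expr0n.
have := bilin_le _ x (vdot_normalize Yx_neq0).
by rewrite -mulmxA -vdotE vdot_normalizel -vnorm_sqr x_unit expr1n; apply.
Qed.

Lemma dS_sqr_le_W1i_max m n (S : {vspace 'M[R]_(m, n)}) P :
  is_orthoproj S P -> dS S ^+ 2 <= W1i_max P.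
Proof.
move=> P_proj; have W_ge0 := W1i_max_orthoproj_ge0 P_proj.
apply: sup_sqr_le => // _ [Y [YS Y_le1] <-]; split; first exact: opnorm_ge0.
apply: opnorm_sqr_le => // u x u_unit x_unit.
apply: le_trans (orthoproj_bilin_sqr_le u x P_proj YS Y_le1) _.
exact: quad_tensv_le_W1i_max.
Qed.

Lemma rank1_factor m n (Y : 'M[R]_(m, n)) : \rank Y = 1%N ->
  exists s (u : 'cV[R]_m) (x : 'cV[R]_n),
    [/\ s != 0, vdot u u = 1, vdot x x = 1 & Y = s *: (u *m x^T)].
Proof.
move=> rankY1; have Y_neq0 : Y != 0 by rewrite -mxrank_eq0 rankY1.
have [a [b Yab]] : exists (a : 'cV[R]_m) (b : 'rV[R]_n), Y = a *m b.
  have := mulmx_base Y; move: (col_base Y) (row_base Y); rewrite rankY1.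
  by move=> a b <-; exists a, b.
have a_neq0 : a != 0 by apply: contraNneq Y_neq0 => a0; rewrite Yab a0 mul0mx.
have b_neq0 : b^T != 0.
  by apply: contraNneq Y_neq0 => /eqP; rewrite trmx_eq0 Yab => /eqP->; rewrite mulmx0.
exists (vnorm a * vnorm b^T), (normalize a), (normalize b^T).
split; rewrite ?vdot_normalize ?mulf_neq0 ?vnorm_eq0 //.
rewrite linearZ /= trmxK -scalemxAl -scalemxAr !scalerA Yab.
have -> : vnorm a * vnorm b^T / vnorm a / vnorm b^T = 1.
  by field; rewrite !vnorm_eq0 a_neq0 b_neq0.
by rewrite scale1r.
Qed.

Lemma rank1_W1i_max_ge1 m n (S : {vspace 'M[R]_(m, n)}) P Y :
  is_orthoproj S P -> Y \in S -> \rank Y = 1%N -> 1 <= W1i_max P.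
Proof.
move=> P_proj YS /rank1_factor[s [u [x [s_neq0 u_unit x_unit Ysux]]]].
have ux_unit : vdot (tensv u x) (tensv u x) = 1.
  by rewrite vdot_tensv u_unit x_unit mulr1.
have uxS : u *m x^T \in S by rewrite -(scalerK s_neq0 (u *m x^T)) -Ysux memvZ.
have ux_le1 : frobnorm (u *m x^T) <= 1.
  by rewrite -(expr_le1 (n := 2)) ?sqrtr_ge0 // frobnorm_sqr ux_unit.
have := orthoproj_bilin_sqr_le u x P_proj uxS ux_le1.
rewrite -vdot_tensv_vecm -[vecm _]/(tensv u x) ux_unit expr1n => /le_trans; apply.
exact: quad_tensv_le_W1i_max.
Qed.

End Bounds.

Unset Implicit Arguments.
Set Strict Implicit.

Theorem theorem4p1 (R : realType) (m n : nat) (S : {vspace 'M[R]_(m, n)})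
    (P : 'M[R]_(n * m)) :
  is_orthoproj S P ->
  dS S ^+ 2 <= W1i_max P /\
  (W1i_max P < 1 -> forall Y : 'M[R]_(m, n), Y \in S -> \rank Y != 1%N).
Proof.
move=> P_proj; split; first exact: dS_sqr_le_W1i_max.
move=> W_lt1 Y YS; apply/eqP => rankY1.
by move: W_lt1; rewrite ltNge (rank1_W1i_max_ge1 P_proj YS rankY1).
Qed.
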